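(* Let $c>0$, $\alpha\ge 0$, and let $s_{\alpha,c}:\mathbb R\to[0,1]$ be the SIGTRON function defined below. For every $n\in\{1,2,3,\dots\}$ and every $\alpha\in\left(1-\frac1n,\,1+\frac1n\right)$, the $n$-th derivative of $s_{\alpha,c}$ exists and is continuous on $\mathbb R$, and it is given by $$\nabla^n s_{\alpha,c}(x)=\begin{cases}\sum_{k=1}^n F_{n,k}(x) & \text{if } x\in\mathrm{dom}(\sigma_{\alpha,c}),\\ 0 & \text{otherwise,}\end{cases}$$ where $$F_{n,k}(x)=A_{n,k}\,\frac{c\,\big(\exp_{\alpha,c}(-x)\big)^{k-n(1-\alpha)}}{\big(c+\exp_{\alpha,c}(-x)\big)^{k+1}},\qquad A_{n,k}=(-1)^{n+k}\,k!\sum_{l=0}^n {\left[n \atop l\right]}{\left\{ l \atop k \right\}}(\alpha-1)^{n-l}.$$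
   Context: For $c>0$ and $\alpha\ge 0$ put $c_\alpha=\frac{1}{\alpha-1}c^{1-\alpha}$ (for $\alpha\ne1$). The extended exponential function is $\exp_{\alpha,c}(x)=c\exp(x)$ if $\alpha=1$ and $\exp_{\alpha,c}(x)=c\left(1-\frac{x}{c_\alpha}\right)^{1/(1-\alpha)}$ otherwise, on the restricted domain $\mathrm{dom}(\exp_{\alpha,c})=\mathbb R$ if $\alpha=1$, $\mathbb R_{\ge c_\alpha}=\{x\ge c_\alpha\}$ if $0\le\alpha<1$, and $\mathbb R_{<c_\alpha}$ if $\alpha>1$. The extended asymmetric sigmoid is $\sigma_{\alpha,c}(x)=\frac{c}{c+\exp_{\alpha,c}(-x)}$ with domain $\mathrm{dom}(\sigma_{\alpha,c})=\mathbb R$ if $\alpha=1$, $\{x\le -c_\alpha\}$ if $0\le\alpha<1$, and $\{x\ge -c_\alpha\}$ if $\alpha>1$ (where for $\alpha>1$ one sets $\sigma_{\alpha,c}(-c_\alpha)=\lim_{x\searrow -c_\alpha}\sigma_{\alpha,c}(x)=0$). SIGTRON is $s_{\alpha,c}(x)=\sigma_{\alpha,c}(x)$ if $x\in\mathrm{dom}(\sigma_{\alpha,c})$ and $s_{\alpha,c}(x)=\sigma_P(x)$ otherwise, where $\sigma_P(x)=1$ if $x\ge0$ and $0$ otherwise. ${\left[n \atop l\right]}$ denotes the (unsigned) Stirling number of the first kind, with recurrence ${\left[n \atop l\right]}=(n-1){\left[n-1 \atop l\right]}+{\left[n-1 \atop l-1\right]}$, and ${\left\{ l \atop k \right\}}$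 the Stirling number of the second kind, with recurrence ${\left\{ l \atop k \right\}}=k{\left\{ l-1 \atop k \right\}}+{\left\{ l-1 \atop k-1 \right\}}$; conventions ${\left\{0\atop0\right\}}={\left[0\atop0\right]}=1$, ${\left\{a\atop0\right\}}={\left[a\atop0\right]}=0$ for $a\ge1$, and both vanish when the lower index exceeds the upper. The convention $0^0=1$ is used in $(\alpha-1)^{n-l}$. *)

From Stdlib Require Import Reals Lra Lia.
From Coquelicot Require Import Coquelicot.
Open Scope R_scope.

(* Real power b^e with the convention 0^e = 0 (used only for e > 0 at b = 0). *)
Definition rpow (b e : R) : R :=
  if Rlt_dec 0 b then Rpower b e else 0.

Definition calpha (a c : R) : R := 1 / (a - 1) * Rpower c (1 - a).

Definition expac (a c x : R) : R :=
  if Req_EM_T a 1 then c * exp x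
  else c * rpow (1 - x / calpha a c) (1 / (1 - a)).

Definition in_dom (a c x : R) : bool :=
  if Req_EM_T a 1 then true
  else if Rlt_dec a 1 then (if Rle_dec x (- calpha a c) then true else false)
  else (if Rle_dec (- calpha a c) x then true else false).

(* extended asymmetric sigmoid; for alpha > 1, sigma(-c_alpha) := 0 (the limit) *)
Definition sigma_ac (a c x : R) : R :=
  if Rlt_dec 1 a then
    (if Req_EM_T x (- calpha a c) then 0 else c / (c + expac a c (- x)))
  else c / (c + expac a c (- x)).

Definition heaviside (x : R) : R := if Rle_dec 0 x then 1 else 0.

Definition sigtron (a c x : R) : R :=
  if in_dom a c x then sigma_ac a c x else heaviside x.

Fixpoint stir1 (n l : nat) : nat :=
  match n, l with
  | O, O => 1%nat
  | O, S _ => 0%nat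
  | S _, O => 0%nat
  | S n', S l' => (n' * stir1 n' (S l') + stir1 n' l')%nat
  end.

Fixpoint stir2 (l k : nat) : nat :=
  match l, k with
  | O, O => 1%nat
  | O, S _ => 0%nat
  | S _, O => 0%nat
  | S l', S k' => (S k' * stir2 l' (S k') + stir2 l' k')%nat
  end.

Definition Acoef (a : R) (n k : nat) : R :=
  (-1) ^ (n + k) * INR (Stdlib.Arith.Factorial.fact k) *
  sum_f_R0 (fun l => INR (stir1 n l) * INR (stir2 l k) * (a - 1) ^ (n - l)) n.

Definition Fnk (a c : R) (n k : nat) (x : R) : R :=
  Acoef a n k * (c * rpow (expac a c (- x)) (INR k - INR n * (1 - a)))
  / (c + expac a c (- x)) ^ (k + 1).

(* At the boundary point x = -c_alpha for alpha > 1, where exp_{alpha,c}(-x)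
   is infinite, the value is the limit of the formula, namely 0. *)
Definition nth_deriv_formula (a c : R) (n : nat) (x : R) : R :=
  if in_dom a c x then
    (if Rlt_dec 1 a then
       (if Req_EM_T x (- calpha a c) then 0
        else sum_f_R0 (fun j => Fnk a c n (S j) x) (n - 1))
     else sum_f_R0 (fun j => Fnk a c n (S j) x) (n - 1))
  else 0.

(* Put E(x) = exp_{a,c}(-x) and u(x) = 1 + x / c_a, so that E = c u^(1/(1-a)) where u > 0
   and E' = -E^a.  For G_{n,k} = c E^(k - n(1-a)) / (c + E)^(k+1) one computes
   G_{n,k}' = -(k - n(1-a)) G_{n+1,k} + (k+1) G_{n+1,k+1}, and the Stirling recurrences
   turn this into (sum_k A_{n,k} G_{n,k})' = sum_k A_{n+1,k} G_{n+1,k}; this proves the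
   formula wherever u > 0, while beyond the domain the SIGTRON is locally constant.
   At the boundary point -c_a every G_{k,j} with j >= 1 is O(u^(1/|1-a| - k)), and
   1/|1-a| > n makes the k-th derivative Hoelder there with exponent > 1 for k < n (so the
   next derivative vanishes) and with exponent > 0 for k = n (so it is continuous). *)

From Stdlib Require Import Reals Lra Lia.
From Coquelicot Require Import Coquelicot.
Open Scope R_scope.

Lemma is_derive_eq (f : R -> R) (x l l' : R) : is_derive f x l -> l = l' -> is_derive f x l'.
Proof. now intros H <-. Qed.

Lemma sum_f_R0_shift (f : nat -> R) n :
  f (S n) = 0 -> sum_f_R0 (fun i => f (S i)) n = sum_f_R0 f n - f O.
Proof.
  intros Hlast.
  assert (H : sum_f_R0 f (S n) = f O + sum_f_R0 (fun i => f (S i)) n)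
    by (apply decomp_sum; lia).
  rewrite tech5, Hlast in H. lra.
Qed.

Lemma is_derive_sum_f_R0 (f : nat -> R -> R) (df : nat -> R) n x :
  (forall j, (j <= n)%nat -> is_derive (f j) x (df j)) ->
  is_derive (fun y => sum_f_R0 (fun j => f j y) n) x (sum_f_R0 df n).
Proof.
  intros Hf. rewrite <- sum_n_Reals.
  apply is_derive_ext with (fun y => sum_n (fun j => f j y) n).
  - intros y. apply sum_n_Reals.
  - now apply (@is_derive_sum_n R_AbsRing R_NormedModule).
Qed.

Lemma rpow_pos b e : 0 < b -> rpow b e = Rpower b e.
Proof. intros Hb. unfold rpow. now destruct (Rlt_dec 0 b). Qed.

Lemma rpow_0_l e : rpow 0 e = 0.
Proof. unfold rpow. destruct (Rlt_dec 0 0); lra. Qed.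

Lemma Rpower_gt0 b e : 0 < Rpower b e.
Proof. apply exp_pos. Qed.

Lemma rpow_ge0 b e : 0 <= rpow b e.
Proof. unfold rpow. destruct (Rlt_dec 0 b); [left; apply Rpower_gt0 | lra]. Qed.

Lemma is_derive_rpow e x : 0 < x -> is_derive (fun b => rpow b e) x (e * rpow x (e - 1)).
Proof.
  intros Hx. rewrite rpow_pos by exact Hx.
  apply is_derive_ext_loc with (fun b => Rpower b e).
  - apply (filter_imp (fun y => 0 < y)); [intros y Hy; now rewrite rpow_pos|].
    exact (open_gt 0 x Hx).
  - now apply is_derive_Reals, derivable_pt_lim_power.
Qed.

Lemma rpow_abs_small K p eps : 0 < p -> 0 < eps ->
  exists delta : posreal, forall h, Rabs h < delta -> K * rpow (Rabs h) p < eps.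
Proof.
  intros Hp Heps.
  set (M := Rabs K + 1).
  assert (HM : 0 < M) by (unfold M; pose proof (Rabs_pos K); lra).
  exists (mkposreal _ (Rpower_gt0 (eps / M) (1 / p))). simpl. intros h Hh.
  assert (Hsmall : rpow (Rabs h) p < eps / M).
  { destruct (Req_dec h 0) as [->|Hh0].
    - rewrite Rabs_R0, rpow_0_l. apply Rdiv_lt_0_compat; lra.
    - rewrite rpow_pos by now apply Rabs_pos_lt.
      replace (eps / M) with (Rpower (Rpower (eps / M) (1 / p)) p).
      + apply Rlt_Rpower_l; [lra | split; [now apply Rabs_pos_lt | exact Hh]].
      + rewrite Rpower_mult. replace (1 / p * p) with 1 by (field; lra).
        apply Rpower_1, Rdiv_lt_0_compat; lra. }
  pose proof (rpow_ge0 (Rabs h) p). pose proof (Rle_abs K).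
  apply Rle_lt_trans with (M * rpow (Rabs h) p); [unfold M; nra|].
  apply (Rmult_lt_compat_l M) in Hsmall; [|exact HM].
  replace (M * (eps / M)) with eps in Hsmall by (field; lra). exact Hsmall.
Qed.

Lemma is_derive_0_of_pow_bound (f : R -> R) x K q : 1 < q ->
  (forall y, Rabs (f y - f x) <= K * rpow (Rabs (y - x)) q) -> is_derive f x 0.
Proof.
  intros Hq Hf. apply is_derive_Reals. intros eps Heps.
  destruct (rpow_abs_small K (q - 1) eps) as [delta Hdelta]; [lra | exact Heps|].
  exists delta. intros h Hh0 Hh.
  specialize (Hf (x + h)). replace (x + h - x) with h in Hf by ring.
  assert (Hah : 0 < Rabs h) by now apply Rabs_pos_lt.
  assert (Hpow : rpow (Rabs h) q = rpow (Rabs h) (q - 1) * Rabs h).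
  { rewrite !rpow_pos by exact Hah.
    rewrite <- (Rpower_1 (Rabs h)) at 3 by exact Hah.
    rewrite <- Rpower_plus. f_equal. ring. }
  rewrite Hpow in Hf. specialize (Hdelta h Hh).
  rewrite Rminus_0_r. unfold Rdiv. rewrite Rabs_mult, Rabs_inv.
  apply Rle_lt_trans with (K * rpow (Rabs h) (q - 1)); [|exact Hdelta].
  apply Rmult_le_reg_r with (Rabs h); [exact Hah|].
  rewrite Rmult_assoc, Rinv_l, Rmult_1_r by lra. lra.
Qed.

Lemma continuous_of_pow_bound (f : R -> R) x K q : 0 < q ->
  (forall y, Rabs (f y - f x) <= K * rpow (Rabs (y - x)) q) -> continuous f x.
Proof.
  intros Hq Hf. apply continuity_pt_filterlim, continuity_pt_locally. intros eps.
  destruct (rpow_abs_small K q eps) as [delta Hdelta]; [exact Hq | apply cond_pos|].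
  exists delta. intros y Hy. eapply Rle_lt_trans; [apply Hf | now apply Hdelta].
Qed.

Lemma pow_div_pow_add_le (b e : R) j m : 0 < b -> 0 <= e ->
  e ^ j / (b + e) ^ (j + m) <= / b ^ m.
Proof.
  intros Hb He.
  assert (Hbe : forall i, 0 < (b + e) ^ i) by (intros; apply pow_lt; lra).
  assert (Hj : e ^ j / (b + e) ^ j <= 1).
  { apply Rmult_le_reg_r with ((b + e) ^ j); [apply Hbe|].
    unfold Rdiv. rewrite Rmult_assoc, Rinv_l, Rmult_1_l, Rmult_1_r by apply Rgt_not_eq, Hbe.
    apply pow_incr; lra. }
  assert (Hm : / (b + e) ^ m <= / b ^ m).
  { apply Rinv_le_contravar; [now apply pow_lt | apply pow_incr; lra]. }
  rewrite pow_add. unfold Rdiv in *. rewrite Rinv_mult, <- Rmult_assoc, <- (Rmult_1_l (/ b ^ m)).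
  apply Rmult_le_compat; [| left; apply Rinv_0_lt_compat, Hbe | exact Hj | exact Hm].
  apply Rmult_le_pos; [now apply pow_le | left; apply Rinv_0_lt_compat, Hbe].
Qed.

Lemma stir1_gt n l : (n < l)%nat -> stir1 n l = 0%nat.
Proof.
  revert l; induction n as [|n IH]; intros [|l] Hl; simpl; try lia.
  rewrite !IH by lia. lia.
Qed.

Lemma stir2_gt l k : (l < k)%nat -> stir2 l k = 0%nat.
Proof.
  revert k; induction l as [|l IH]; intros [|k] Hk; simpl; try lia.
  rewrite !IH by lia. lia.
Qed.

Definition stirling_sum (a : R) (n k : nat) : R :=
  sum_f_R0 (fun l => INR (stir1 n l) * INR (stir2 l k) * (a - 1) ^ (n - l)) n.

Lemma stirling_sum_succ a n k :
  stirling_sum a (S n) (S k) =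
  (INR (S k) + INR n * (a - 1)) * stirling_sum a n (S k) + stirling_sum a n k.
Proof.
  set (T := fun m l => INR (stir1 n l) * INR (stir2 l m) * (a - 1) ^ (n - l)).
  assert (Hshift : sum_f_R0 (fun l => T (S k) (S l)) n = stirling_sum a n (S k) - T (S k) O).
  { apply sum_f_R0_shift. unfold T. rewrite stir1_gt by lia. simpl. ring. }
  assert (HT0 : INR n * T (S k) O = 0) by (unfold T; destruct n; simpl; ring).
  unfold stirling_sum at 1. rewrite decomp_sum by lia.
  rewrite (sum_eq _ (fun l => T (S k) (S l) * ((a - 1) * INR n)
                              + (T (S k) l * INR (S k) + T k l))).
  - simpl Nat.pred. rewrite sum_plus, sum_plus, <- !scal_sum, Hshift.
    change (sum_f_R0 (T ?m) n) with (stirling_sum a n m).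
    replace ((a - 1) * INR n * (stirling_sum a n (S k) - T (S k) O))
      with ((a - 1) * INR n * stirling_sum a n (S k) - (a - 1) * (INR n * T (S k) O)) by ring.
    rewrite HT0. simpl (stir1 (S n) 0). simpl INR at 1. ring.
  - intros l Hl. unfold T. simpl stir1. simpl stir2. rewrite !plus_INR, !mult_INR, S_INR.
    replace (S n - S l)%nat with (n - l)%nat by lia.
    destruct (Nat.eq_dec l n) as [->|Hne].
    + rewrite stir1_gt by lia. simpl. ring.
    + replace (n - l)%nat with (S (n - S l)) by lia. simpl. ring.
Qed.

Lemma Acoef_stirling a n k :
  Acoef a n k = (-1) ^ (n + k) * INR (Factorial.fact k) * stirling_sum a n k.
Proof. reflexivity. Qed.

Lemma Acoef_succ a n k :
  Acoef a (S n) (S k) =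
  - (INR (S k) - INR n * (1 - a)) * Acoef a n (S k) + INR (S k) * Acoef a n k.
Proof.
  rewrite !Acoef_stirling, stirling_sum_succ.
  replace (S n + S k)%nat with (S (S (n + k))) by lia.
  replace (n + S k)%nat with (S (n + k)) by lia.
  change (Factorial.fact (S k)) with (S k * Factorial.fact k)%nat.
  rewrite mult_INR. simpl pow. ring.
Qed.

Lemma Acoef_gt a n k : (n < k)%nat -> Acoef a n k = 0.
Proof.
  intros Hnk. rewrite Acoef_stirling. unfold stirling_sum.
  rewrite (sum_eq _ (fun _ => 0)), sum_cte; [ring|].
  intros l Hl. rewrite stir2_gt by lia. simpl. ring.
Qed.

Lemma Acoef_0_r a n : (0 < n)%nat -> Acoef a n 0 = 0.
Proof.
  intros Hn. rewrite Acoef_stirling. unfold stirling_sum.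
  rewrite (sum_eq _ (fun _ => 0)), sum_cte; [ring|].
  intros [|l] Hl; [destruct n; [lia|] |]; simpl; ring.
Qed.

Lemma Acoef_0_0 a : Acoef a 0 0 = 1.
Proof. rewrite Acoef_stirling. unfold stirling_sum. simpl. ring. Qed.

Section Sigtron.

Variables a c : R.
Hypothesis hc : 0 < c.

Lemma calpha_neq0 : a <> 1 -> calpha a c <> 0.
Proof.
  intros Ha. unfold calpha. apply Rmult_integral_contrapositive. split.
  - unfold Rdiv. rewrite Rmult_1_l. apply Rinv_neq_0_compat. lra.
  - apply Rgt_not_eq, Rpower_gt0.
Qed.

Lemma calpha_lt0 : a < 1 -> calpha a c < 0.
Proof.
  intros Ha. unfold calpha. pose proof (Rpower_gt0 c (1 - a)).
  assert (1 / (a - 1) < 0) by (unfold Rdiv; rewrite Rmult_1_l; apply Rinv_lt_0_compat; lra).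
  nra.
Qed.

Lemma calpha_gt0 : 1 < a -> 0 < calpha a c.
Proof.
  intros Ha. unfold calpha. pose proof (Rpower_gt0 c (1 - a)).
  assert (0 < 1 / (a - 1)) by (apply Rdiv_lt_0_compat; lra).
  nra.
Qed.

Definition expacN (x : R) : R := expac a c (- x).

Definition ubase (x : R) : R := 1 - (- x) / calpha a c.

Definition regular (x : R) : Prop := a = 1 \/ 0 < ubase x.

Lemma ubase_mul x : a <> 1 -> ubase x * calpha a c = calpha a c + x.
Proof. intros Ha. unfold ubase. field. now apply calpha_neq0. Qed.

Lemma ubase_eq0 x : a <> 1 -> ubase x = 0 <-> x = - calpha a c.
Proof.
  intros Ha. pose proof (ubase_mul x Ha) as Hmul.
  split; intros Hx.
  - rewrite Hx in Hmul. lra.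
  - apply Rmult_eq_reg_r with (calpha a c); [|now apply calpha_neq0]. rewrite Hmul, Hx. ring.
Qed.

Lemma is_derive_ubase x : a <> 1 -> is_derive ubase x (/ calpha a c).
Proof. intros Ha. unfold ubase. auto_derive; [trivial|]. field. now apply calpha_neq0. Qed.

Lemma ubase_locally (P : R -> Prop) x : a <> 1 -> open P -> P (ubase x) ->
  locally x (fun y => P (ubase y)).
Proof.
  intros Ha HP Hx. apply (ex_derive_continuous ubase x).
  - exists (/ calpha a c). now apply is_derive_ubase.
  - now apply HP.
Qed.

Lemma regular_locally x : regular x -> locally x regular.
Proof.
  intros [Ha|Hx].
  - apply filter_forall. now left.
  - destruct (Req_dec a 1) as [Ha|Ha]; [apply filter_forall; now left|].
    eapply filter_imp; [|exact (ubase_locally _ x Ha (open_gt 0) Hx)]. now right.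
Qed.

Lemma expacN_1 x : a = 1 -> expacN x = c * exp (- x).
Proof. intros Ha. unfold expacN, expac. now destruct (Req_EM_T a 1). Qed.

Lemma expacN_ne1 x : a <> 1 -> expacN x = c * rpow (ubase x) (1 / (1 - a)).
Proof. intros Ha. unfold expacN, expac, ubase. now destruct (Req_EM_T a 1). Qed.

Lemma expacN_pos x : regular x -> 0 < expacN x.
Proof.
  intros Hx. destruct (Req_dec a 1) as [Ha|Ha].
  - rewrite expacN_1 by exact Ha. pose proof (exp_pos (- x)). nra.
  - destruct Hx as [|Hx]; [contradiction|].
    rewrite expacN_ne1, rpow_pos by assumption. pose proof (Rpower_gt0 (ubase x) (1 / (1 - a))). nra.
Qed.

Lemma is_derive_expacN x : regular x -> is_derive expacN x (- rpow (expacN x) a).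
Proof.
  intros Hx. pose proof (expacN_pos x Hx) as HE.
  rewrite rpow_pos by exact HE.
  destruct (Req_dec a 1) as [Ha|Ha].
  - apply is_derive_ext with (fun y => c * exp (- y)); [intros; symmetry; now apply expacN_1|].
    rewrite Ha, Rpower_1, expacN_1 by auto. auto_derive; [trivial | ring].
  - destruct Hx as [|Hx]; [contradiction|].
    set (p := 1 / (1 - a)).
    apply is_derive_ext with (fun y => c * rpow (ubase y) p); [intros; symmetry; now apply expacN_ne1|].
    eapply is_derive_eq.
    { apply (is_derive_comp (fun u => c * rpow u p) ubase).
      - apply is_derive_scal, is_derive_rpow, Hx.
      - now apply is_derive_ubase. }
    assert (Hp : p - 1 = p * a) by (unfold p; field; lra).
    assert (Hcp : c * p / calpha a c = - Rpower c a).
    { unfold calpha, p. rewrite <- (Rpower_1 c) at 1 by exact hc.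
      replace 1 with ((1 - a) + a) at 1 by ring. rewrite Rpower_plus.
      field. repeat split; try lra; apply Rgt_not_eq, Rpower_gt0. }
    rewrite expacN_ne1, !rpow_pos by auto.
    rewrite <- Rpower_mult_distr, Rpower_mult by (auto; apply Rpower_gt0).
    fold p. rewrite <- Hp. replace (Rpower c a) with (- (c * p / calpha a c)) by lra.
    unfold scal; simpl; unfold mult; simpl. unfold Rdiv. ring.
Qed.

Definition Gnk (n k : nat) (x : R) : R :=
  c * rpow (expacN x) (INR k - INR n * (1 - a)) / (c + expacN x) ^ (k + 1).

Lemma Fnk_Gnk n k x : Fnk a c n k x = Acoef a n k * Gnk n k x.
Proof. unfold Fnk, Gnk, expacN, Rdiv. ring. Qed.

Lemma is_derive_Gnk n k x : regular x ->
  is_derive (Gnk n k) x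
    (- (INR k - INR n * (1 - a)) * Gnk (S n) k x + INR (S k) * Gnk (S n) (S k) x).
Proof.
  intros Hx. pose proof (expacN_pos x Hx) as HE.
  set (m := INR k - INR n * (1 - a)).
  set (g := fun e => c * rpow e m / (c + e) ^ (k + 1)).
  apply is_derive_ext with (fun y => g (expacN y)); [reflexivity|].
  eapply is_derive_eq.
  { apply (is_derive_comp g expacN); [|now apply is_derive_expacN].
    apply is_derive_div; [apply is_derive_scal, is_derive_rpow, HE | | apply pow_nonzero; lra].
    auto_derive; [trivial | reflexivity]. }
  unfold Gnk, g. set (e := expacN x) in *.
  replace (INR k - INR (S n) * (1 - a)) with (m - 1 + a) by (unfold m; rewrite S_INR; ring).
  replace (INR (S k) - INR (S n) * (1 - a)) with (m + a) by (unfold m; rewrite !S_INR; ring).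
  rewrite !rpow_pos, !Rpower_plus by exact HE.
  rewrite !Nat.add_1_r. simpl pow. rewrite S_INR.
  unfold scal; simpl; unfold mult; simpl.
  field. split; [apply pow_nonzero|]; lra.
Qed.

Definition Fsum (n : nat) (x : R) : R := sum_f_R0 (fun k => Acoef a n k * Gnk n k x) n.

Lemma is_derive_Fsum n x : regular x -> is_derive (Fsum n) x (Fsum (S n) x).
Proof.
  intros Hx. unfold Fsum at 1.
  eapply is_derive_eq.
  { apply (is_derive_sum_f_R0 (fun k y => Acoef a n k * Gnk n k y)).
    intros k _. apply is_derive_scal. now apply is_derive_Gnk. }
  set (G := fun k => Gnk (S n) k x).
  set (f := fun k => - (INR k - INR n * (1 - a)) * Acoef a n k * G k).
  assert (Hf0 : f O = 0).
  { unfold f. destruct n as [|n]; [simpl; ring | rewrite Acoef_0_r by lia; ring]. }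
  assert (Hshift : sum_f_R0 (fun k => f (S k)) n = sum_f_R0 f n - f O).
  { apply sum_f_R0_shift. unfold f. rewrite Acoef_gt by lia. ring. }
  unfold Fsum. rewrite (decomp_sum _ (S n)), (Acoef_0_r a (S n)) by lia. simpl Nat.pred.
  rewrite (sum_eq (fun k => Acoef a (S n) (S k) * Gnk (S n) (S k) x)
                  (fun k => f (S k) + INR (S k) * Acoef a n k * G (S k)))
    by (intros; rewrite Acoef_succ; unfold f, G; ring).
  rewrite (sum_eq _ (fun k => f k + INR (S k) * Acoef a n k * G (S k)))
    by (intros; unfold f, G; ring).
  rewrite !sum_plus, Hshift, Hf0. ring.
Qed.

Lemma Fsum_0 x : regular x -> Fsum 0 x = c / (c + expacN x).
Proof.
  intros Hx. pose proof (expacN_pos x Hx) as HE.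
  unfold Fsum, Gnk. simpl. rewrite Acoef_0_0, rpow_pos by exact HE.
  replace (0 - 0 * (1 - a)) with 0 by ring. rewrite Rpower_O by exact HE.
  field. lra.
Qed.

Lemma Fsum_S n x : Fsum (S n) x = sum_f_R0 (fun k => Fnk a c (S n) (S k) x) n.
Proof.
  unfold Fsum. rewrite decomp_sum, Acoef_0_r by lia. rewrite Rmult_0_l, Rplus_0_l.
  apply sum_eq. intros k _. now rewrite Fnk_Gnk.
Qed.

Definition sigtron_deriv (k : nat) : R -> R :=
  match k with O => sigtron a c | S _ => nth_deriv_formula a c k end.

Definition outer_value (k : nat) : R :=
  match k with O => if Rlt_dec a 1 then 1 else 0 | S _ => 0 end.

Lemma in_dom_iff x : a <> 1 -> in_dom a c x = true <-> 0 <= ubase x.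
Proof.
  intros Ha. pose proof (ubase_mul x Ha) as Hmul.
  unfold in_dom. destruct (Req_EM_T a 1) as [|_]; [contradiction|].
  destruct (Rlt_dec a 1) as [Hlt|Hge].
  - pose proof (calpha_lt0 Hlt).
    destruct (Rle_dec x (- calpha a c)); split; intros; try discriminate; try reflexivity; nra.
  - assert (Hgt : 1 < a) by lra. pose proof (calpha_gt0 Hgt).
    destruct (Rle_dec (- calpha a c) x); split; intros; try discriminate; try reflexivity; nra.
Qed.

Lemma in_dom_regular x : regular x ->
  in_dom a c x = true /\ (1 < a -> x <> - calpha a c).
Proof.
  intros [Ha|Hx].
  - unfold in_dom. destruct (Req_EM_T a 1); [|contradiction]. split; [reflexivity | lra].
  - destruct (Req_dec a 1) as [Ha|Ha].
    + unfold in_dom. destruct (Req_EM_T a 1); [|contradiction]. split; [reflexivity | lra].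
    + split; [apply in_dom_iff; lra|]. intros _ Hxc. apply ubase_eq0 in Hxc; lra.
Qed.

Lemma sigtron_deriv_regular k x : regular x -> sigtron_deriv k x = Fsum k x.
Proof.
  intros Hx. destruct (in_dom_regular x Hx) as [Hd Hne].
  destruct k as [|k]; simpl sigtron_deriv.
  - unfold sigtron, sigma_ac. rewrite Hd, Fsum_0 by exact Hx.
    destruct (Rlt_dec 1 a) as [Hgt|]; [destruct (Req_EM_T x (- calpha a c)) as [Hxc|]|];
      [now destruct (Hne Hgt Hxc) | reflexivity | reflexivity].
  - unfold nth_deriv_formula. rewrite Hd, Fsum_S. replace (S k - 1)%nat with k by lia.
    destruct (Rlt_dec 1 a) as [Hgt|]; [destruct (Req_EM_T x (- calpha a c)) as [Hxc|]|];
      [now destruct (Hne Hgt Hxc) | reflexivity | reflexivity].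
Qed.

Lemma sigtron_deriv_outside k x : a <> 1 -> ubase x <= 0 ->
  sigtron_deriv k x = outer_value k.
Proof.
  intros Ha Hx. pose proof (ubase_mul x Ha) as Hmul.
  destruct (in_dom a c x) eqn:Hd.
  - assert (Hx0 : ubase x = 0) by (apply in_dom_iff in Hd; lra).
    assert (HE : expacN x = 0) by (rewrite expacN_ne1, Hx0, rpow_0_l by exact Ha; ring).
    assert (Hxc : x = - calpha a c) by now apply ubase_eq0.
    destruct k as [|k]; simpl.
    + unfold sigtron, sigma_ac. rewrite Hd. change (expac a c (- x)) with (expacN x).
      destruct (Rlt_dec 1 a); [destruct (Req_EM_T x (- calpha a c)); [|contradiction]|];
        destruct (Rlt_dec a 1); try lra. rewrite HE. field. lra.
    + unfold nth_deriv_formula. rewrite Hd.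
      assert (Hsum : sum_f_R0 (fun j => Fnk a c (S k) (S j) x) (S k - 1) = 0).
      { rewrite (sum_eq _ (fun _ => 0)), sum_cte; [ring|].
        intros j _. unfold Fnk. change (expac a c (- x)) with (expacN x).
        rewrite HE, rpow_0_l. unfold Rdiv. ring. }
      destruct (Rlt_dec 1 a); [destruct (Req_EM_T x (- calpha a c))|]; auto.
  - destruct k as [|k]; simpl; [|unfold nth_deriv_formula; now rewrite Hd].
    assert (Hneg : ubase x < 0).
    { destruct (Rlt_le_dec (ubase x) 0); [assumption|].
      assert (in_dom a c x = true) by (apply in_dom_iff; lra). congruence. }
    unfold sigtron, heaviside. rewrite Hd.
    destruct (Rlt_dec a 1) as [Hlt|Hge].
    + pose proof (calpha_lt0 Hlt). destruct (Rle_dec 0 x); [reflexivity | nra].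
    + assert (Hgt : 1 < a) by lra. pose proof (calpha_gt0 Hgt).
      destruct (Rle_dec 0 x); [nra | reflexivity].
Qed.

Definition holder_exponent (k : nat) : R := 1 / Rabs (1 - a) - INR k.

Lemma Rpower_expacN x s : a <> 1 -> 0 < ubase x ->
  Rpower (expacN x) s = Rpower c s * Rpower (ubase x) (s / (1 - a)).
Proof.
  intros Ha Hx. rewrite expacN_ne1, rpow_pos by assumption.
  rewrite <- Rpower_mult_distr, Rpower_mult by (auto; apply Rpower_gt0).
  do 2 f_equal. field. lra.
Qed.

Lemma Gnk_factor n k i x : regular x ->
  Gnk n k x = c * Rpower (expacN x) (INR k - INR n * (1 - a) - INR i)
                * (expacN x ^ i / (c + expacN x) ^ (k + 1)).
Proof.
  intros Hx. pose proof (expacN_pos x Hx) as HE.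
  unfold Gnk. rewrite rpow_pos by exact HE.
  rewrite <- (Rpower_pow i) by exact HE.
  replace (Rpower (expacN x) (INR k - INR n * (1 - a)))
    with (Rpower (expacN x) (INR k - INR n * (1 - a) - INR i) * Rpower (expacN x) (INR i))
    by (rewrite <- Rpower_plus; f_equal; ring).
  unfold Rdiv. ring.
Qed.

Definition Gnk_const (n : nat) : R :=
  if Rlt_dec a 1 then Rpower c (1 - INR n * (1 - a)) / c
  else c * Rpower c (INR n * (a - 1) - 1).

Lemma Gnk_const_ge0 n : 0 <= Gnk_const n.
Proof.
  unfold Gnk_const. pose proof (Rpower_gt0 c (1 - INR n * (1 - a))).
  pose proof (Rpower_gt0 c (INR n * (a - 1) - 1)).
  destruct (Rlt_dec a 1); [left; now apply Rdiv_lt_0_compat | nra].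
Qed.

(* For [a < 1] the powers of [expacN] vanish at the boundary, for [a > 1] they blow up:
   hence the two ways of splitting off a power of [expacN] in [Gnk_factor]. *)
Lemma Gnk_bound n k x : a <> 1 -> 0 < ubase x -> (1 <= k)%nat ->
  Rabs (Gnk n k x) <= Gnk_const n * Rpower (ubase x) (holder_exponent n).
Proof.
  intros Ha Hx Hk. assert (Hreg : regular x) by now right.
  pose proof (expacN_pos x Hreg) as HE.
  assert (Hratio : forall i m, (k + 1 = i + m)%nat ->
    0 <= expacN x ^ i / (c + expacN x) ^ (k + 1) <= / c ^ m).
  { intros i m Him. rewrite Him. split; [|apply pow_div_pow_add_le; lra].
    apply Rdiv_le_0_compat; [apply pow_le | apply pow_lt]; lra. }
  unfold Gnk_const, holder_exponent.
  destruct (Rlt_dec a 1) as [Hlt|Hge].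
  - rewrite (Gnk_factor n k (k - 1)) by exact Hreg.
    destruct (Hratio (k - 1)%nat 2%nat ltac:(lia)) as [H0 H1].
    rewrite minus_INR by exact Hk. simpl INR.
    replace (INR k - INR n * (1 - a) - (INR k - 1)) with (1 - INR n * (1 - a)) by ring.
    set (s := 1 - INR n * (1 - a)). pose proof (Rpower_gt0 (expacN x) s).
    rewrite Rabs_pos_eq by (apply Rmult_le_pos; nra).
    apply Rle_trans with (c * Rpower (expacN x) s * / c ^ 2); [apply Rmult_le_compat_l; nra|].
    rewrite Rpower_expacN, Rabs_pos_eq by lra. right.
    replace (s / (1 - a)) with (1 / (1 - a) - INR n) by (unfold s; field; lra).
    field. lra.
  - rewrite (Gnk_factor n k (k + 1)) by exact Hreg.
    destruct (Hratio (k + 1)%nat 0%nat ltac:(lia)) as [H0 H1].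
    rewrite plus_INR. simpl INR.
    replace (INR k - INR n * (1 - a) - (INR k + 1)) with (INR n * (a - 1) - 1) by ring.
    set (s := INR n * (a - 1) - 1). pose proof (Rpower_gt0 (expacN x) s).
    rewrite Rabs_pos_eq by (apply Rmult_le_pos; nra).
    apply Rle_trans with (c * Rpower (expacN x) s * / c ^ 0); [apply Rmult_le_compat_l; nra|].
    rewrite Rpower_expacN, Rabs_left by lra. right.
    replace (s / (1 - a)) with (1 / - (1 - a) - INR n) by (unfold s; field; lra).
    simpl. field.
Qed.

Lemma sigtron_sub_outer_le x : a <> 1 -> 0 < ubase x ->
  Rabs (sigtron a c x - outer_value 0) <= Rpower (ubase x) (1 / Rabs (1 - a)).
Proof.
  intros Ha Hx.
  change (sigtron a c x) with (sigtron_deriv 0 x).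
  rewrite sigtron_deriv_regular, Fsum_0 by now right.
  assert (HE : expacN x = c * Rpower (ubase x) (1 / (1 - a)))
    by now rewrite expacN_ne1, rpow_pos.
  pose proof (Rpower_gt0 (ubase x) (1 / (1 - a))).
  unfold outer_value. destruct (Rlt_dec a 1).
  - replace (c / (c + expacN x) - 1) with (- (expacN x / (c + expacN x))) by (field; nra).
    rewrite Rabs_Ropp, Rabs_pos_eq, (Rabs_pos_eq (1 - a)) by (try apply Rdiv_le_0_compat; nra).
    apply Rle_trans with (expacN x / c).
    + unfold Rdiv. apply Rmult_le_compat_l; [nra | apply Rinv_le_contravar; nra].
    + rewrite HE. right. field. lra.
  - rewrite Rminus_0_r, Rabs_pos_eq, Rabs_left by (try apply Rdiv_le_0_compat; nra).
    apply Rle_trans with (c / expacN x).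
    + unfold Rdiv. apply Rmult_le_compat_l; [lra | apply Rinv_le_contravar; nra].
    + rewrite HE. replace (1 / - (1 - a)) with (- (1 / (1 - a))) by (field; lra).
      rewrite Rpower_Ropp. right. field. lra.
Qed.

Lemma sigtron_deriv_bound k : a <> 1 -> exists K, 0 <= K /\ forall x, 0 < ubase x ->
  Rabs (sigtron_deriv k x - outer_value k) <= K * Rpower (ubase x) (holder_exponent k).
Proof.
  intros Ha. destruct k as [|k].
  - exists 1. split; [lra|]. intros x Hx.
    unfold holder_exponent. simpl INR. rewrite Rminus_0_r, Rmult_1_l.
    now apply sigtron_sub_outer_le.
  - exists (sum_f_R0 (fun j => Rabs (Acoef a (S k) j)) (S k) * Gnk_const (S k)).
    split.
    { apply Rmult_le_pos; [apply cond_pos_sum; intros; apply Rabs_pos | apply Gnk_const_ge0]. }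
    intros x Hx. rewrite sigtron_deriv_regular by now right.
    simpl outer_value. rewrite Rminus_0_r. unfold Fsum.
    eapply Rle_trans; [apply sum_f_R0_triangle|].
    rewrite Rmult_assoc, (Rmult_comm (sum_f_R0 _ _)), scal_sum.
    apply sum_Rle. intros [|j] Hj; rewrite Rabs_mult.
    + rewrite Acoef_0_r, Rabs_R0 by lia. lra.
    + apply Rmult_le_compat_l; [apply Rabs_pos | apply Gnk_bound; auto; lia].
Qed.

Lemma sigtron_deriv_holder k : a <> 1 -> exists K, forall y,
  Rabs (sigtron_deriv k y - sigtron_deriv k (- calpha a c))
    <= K * rpow (Rabs (y - - calpha a c)) (holder_exponent k).
Proof.
  intros Ha. pose proof (calpha_neq0 Ha) as Hca.
  assert (Habs : 0 < Rabs (calpha a c)) by now apply Rabs_pos_lt.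
  destruct (sigtron_deriv_bound k Ha) as [K [HK Hbound]].
  exists (K * Rpower (/ Rabs (calpha a c)) (holder_exponent k)). intros y.
  rewrite (sigtron_deriv_outside k (- calpha a c)) by (auto; right; now apply ubase_eq0).
  destruct (Rlt_le_dec 0 (ubase y)) as [Hy|Hy].
  - assert (Hu : ubase y = Rabs (y - - calpha a c) * / Rabs (calpha a c)).
    { rewrite <- (Rabs_pos_eq (ubase y)), <- Rabs_inv, <- Rabs_mult by lra. f_equal.
      apply Rmult_eq_reg_r with (calpha a c); [|exact Hca].
      rewrite ubase_mul, Rmult_assoc, Rinv_l by assumption. ring. }
    assert (Hd : 0 < Rabs (y - - calpha a c)).
    { apply Rabs_pos_lt. intros Hyc. rewrite Hyc, Rabs_R0, Rmult_0_l in Hu. lra. }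
    eapply Rle_trans; [exact (Hbound y Hy)|]. right.
    rewrite Hu, rpow_pos, <- Rpower_mult_distr by (auto; now apply Rinv_0_lt_compat). ring.
  - rewrite sigtron_deriv_outside, Rminus_diag, Rabs_R0 by assumption.
    apply Rmult_le_pos; [apply Rmult_le_pos; [exact HK | left; apply Rpower_gt0] | apply rpow_ge0].
Qed.

Lemma is_derive_sigtron_deriv_off_boundary k x : a = 1 \/ ubase x <> 0 ->
  is_derive (sigtron_deriv k) x (sigtron_deriv (S k) x).
Proof.
  intros Hx.
  assert (Hcases : regular x \/ (a <> 1 /\ ubase x < 0)).
  { destruct (Req_dec a 1) as [Ha|Ha]; [now left; left|].
    destruct Hx as [|Hx]; [contradiction|].
    destruct (Rlt_dec 0 (ubase x)); [now left; right | right; split; lra]. }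
  destruct Hcases as [Hreg | [Ha Hneg]].
  - rewrite sigtron_deriv_regular by exact Hreg.
    apply is_derive_ext_loc with (Fsum k); [|now apply is_derive_Fsum].
    eapply filter_imp; [|exact (regular_locally x Hreg)].
    intros y Hy. symmetry. now apply sigtron_deriv_regular.
  - rewrite sigtron_deriv_outside by (auto; lra).
    change (outer_value (S k)) with 0.
    apply is_derive_ext_loc with (fun _ => outer_value k); [|apply (is_derive_const (outer_value k))].
    eapply filter_imp; [|exact (ubase_locally _ x Ha (open_lt 0) Hneg)].
    intros y Hy. symmetry. apply sigtron_deriv_outside; auto; lra.
Qed.

Lemma is_derive_sigtron_deriv k x : (a <> 1 -> 1 < holder_exponent k) ->
  is_derive (sigtron_deriv k) x (sigtron_deriv (S k) x).
Proof.
  intros Hq. destruct (Req_dec a 1) as [Ha|Ha].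
  { apply is_derive_sigtron_deriv_off_boundary. now left. }
  destruct (Req_dec x (- calpha a c)) as [->|Hx].
  - rewrite sigtron_deriv_outside by (auto; right; now apply ubase_eq0).
    destruct (sigtron_deriv_holder k Ha) as [K HK].
    exact (is_derive_0_of_pow_bound _ _ K _ (Hq Ha) HK).
  - apply is_derive_sigtron_deriv_off_boundary. right. now rewrite ubase_eq0.
Qed.

Lemma continuous_sigtron_deriv k x : (a <> 1 -> 0 < holder_exponent k) ->
  continuous (sigtron_deriv k) x.
Proof.
  intros Hq.
  destruct (Req_dec a 1) as [Ha|Ha]; [|destruct (Req_dec x (- calpha a c)) as [->|Hx]].
  2:{ destruct (sigtron_deriv_holder k Ha) as [K HK].
      exact (continuous_of_pow_bound _ _ K _ (Hq Ha) HK). }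
  all: apply (@ex_derive_continuous R_AbsRing R_NormedModule);
    eexists; apply is_derive_sigtron_deriv_off_boundary.
  - now left.
  - right. now rewrite ubase_eq0.
Qed.

End Sigtron.

Lemma inv_abs_one_sub_gt n a : (0 < n)%nat ->
  1 - 1 / INR n < a -> a < 1 + 1 / INR n -> a <> 1 -> INR n < 1 / Rabs (1 - a).
Proof.
  intros Hn H1 H2 Ha.
  assert (Hn0 : 0 < INR n) by now apply lt_0_INR.
  assert (Hab : Rabs (1 - a) < / INR n) by (apply Rabs_def1; unfold Rdiv in *; lra).
  assert (Hpos : 0 < Rabs (1 - a)) by (apply Rabs_pos_lt; lra).
  replace (INR n) with (1 / (1 / INR n)) by (field; lra).
  unfold Rdiv. rewrite !Rmult_1_l. apply Rinv_lt_contravar; [|exact Hab].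
  apply Rmult_lt_0_compat; [exact Hpos | now apply Rinv_0_lt_compat].
Qed.

Theorem theorem2 (c a : R) (hc : 0 < c) (ha : 0 <= a) (n : nat) (hn : (1 <= n)%nat)
  (ha1 : 1 - 1 / INR n < a) (ha2 : a < 1 + 1 / INR n) :
  (forall (k : nat) (x : R), (k <= n)%nat -> ex_derive_n (sigtron a c) k x) /\
  (forall x : R, continuous (Derive_n (sigtron a c) n) x) /\
  (forall x : R, Derive_n (sigtron a c) n x = nth_deriv_formula a c n x).
Proof.
  assert (Hq : forall k, (k <= n)%nat -> a <> 1 -> INR n - INR k < holder_exponent a k).
  { intros k Hk Ha. unfold holder_exponent.
    pose proof (inv_abs_one_sub_gt n a ltac:(lia) ha1 ha2 Ha). lra. }
  assert (Hstep : forall k x, (k < n)%nat ->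
    is_derive (sigtron_deriv a c k) x (sigtron_deriv a c (S k) x)).
  { intros k x Hk. apply is_derive_sigtron_deriv; [exact hc|]. intros Ha.
    assert (INR (S k) <= INR n) by (apply le_INR; lia).
    specialize (Hq k ltac:(lia) Ha). rewrite S_INR in *. lra. }
  assert (Hderiv : forall k x, (k <= n)%nat -> Derive_n (sigtron a c) k x = sigtron_deriv a c k x).
  { induction k as [|k IH]; intros x Hk; [reflexivity|].
    simpl. rewrite (Derive_ext _ (sigtron_deriv a c k)) by (intros; apply IH; lia).
    apply is_derive_unique, Hstep. lia. }
  split; [|split].
  - intros [|k] x Hk; [exact I|]. simpl.
    apply ex_derive_ext with (sigtron_deriv a c k); [intros; symmetry; apply Hderiv; lia|].
    eexists. apply Hstep. lia.
  - intros x. apply continuous_ext with (sigtron_deriv a c n); [intros; symmetry; now apply Hderiv|].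
    apply continuous_sigtron_deriv; [exact hc|]. intros Ha.
    specialize (Hq n (le_n n) Ha). lra.
  - intros x. rewrite Hderiv by lia. destruct n; [lia | reflexivity].
Qed.
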